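(* Let $P\subseteq[0,k]^n$ be a lattice polytope of dimension $d$. Let $\sigma:[n]\to\pm[n]$ be any signed permutation, let $\alpha\ge 2k+1$, and let \[\mathbf{x}_\sigma=(\operatorname{sign}(\sigma(1))\alpha^{|\sigma(1)|},\dots,\operatorname{sign}(\sigma(n))\alpha^{|\sigma(n)|}).\] Let $\mathbf{v}$ be a vertex of $P$ maximizing $\mathbf{x}_\sigma^{\intercal}\mathbf{x}$ over $P$. Then for any $\mathbf{c}\in\mathbb{R}^n$, the shortest $\mathbf{c}$-monotone path from $\mathbf{v}$ to a $\mathbf{c}$-maximal vertex of $P$ has length at most $dk$.
   Context: A signed permutation $\sigma:[n]\to\pm[n]=\{\pm1,\dots,\pm n\}$ is a map such that $i\mapsto|\sigma(i)|$ is a permutation of $[n]$. A lattice polytope has integer vertices. A $\mathbf{c}$-monotone path is a sequence of vertices of $P$ in which consecutive vertices are joined by an edge of $P$ and $\mathbf{c}^{\intercal}\mathbf{x}$ strictly increases; its length is its number of edges. *)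

From HB Require Import structures.
From mathcomp Require Import all_boot all_order all_algebra all_fingroup.
Set Implicit Arguments. Unset Strict Implicit. Unset Printing Implicit Defensive.
Import Order.TTheory GRing.Theory Num.Theory.
Local Open Scope ring_scope.

Section Polytopes.
Variables (R : realFieldType) (n : nat).

Definition dotv (c x : 'rV[R]_n) : R := \sum_(i < n) c 0 i * x 0 i.

Definition conv_hull (S : seq 'rV[R]_n) (x : 'rV[R]_n) : Prop :=
  exists w : 'I_(size S) -> R,
    (forall i, 0 <= w i) /\ \sum_i w i = 1 /\ x = \sum_i w i *: S`_i.

Definition lattice_in_box (k : nat) (S : seq 'rV[R]_n) : Prop :=
  forall x, x \in S -> forall j : 'I_n, exists m : nat, (m <= k)%N /\ x 0 j = m%:R.

Definition maximizer (P : 'rV[R]_n -> Prop) (c x : 'rV[R]_n) : Prop :=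
  P x /\ forall y, P y -> dotv c y <= dotv c x.

Definition is_vertex (P : 'rV[R]_n -> Prop) (v : 'rV[R]_n) : Prop :=
  exists c, forall x, maximizer P c x <-> x = v.

Definition is_edge (P : 'rV[R]_n -> Prop) (u w : 'rV[R]_n) : Prop :=
  u <> w /\ exists c, forall x, maximizer P c x <->
    exists t : R, 0 <= t <= 1 /\ x = (1 - t) *: u + t *: w.

Definition aff_indep (m : nat) (p : 'I_m.+1 -> 'rV[R]_n) : bool :=
  row_free (\matrix_(i < m, j < n) (p (lift ord0 i) - p ord0) 0 j).

Definition polytope_dim (P : 'rV[R]_n -> Prop) (d : nat) : Prop :=
  (exists p : 'I_d.+1 -> 'rV[R]_n, (forall i, P (p i)) /\ aff_indep p) /\
  (forall p : 'I_d.+2 -> 'rV[R]_n, (forall i, P (p i)) -> ~~ aff_indep p).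

(* x_sigma for the signed permutation sigma(i) = (-1)^(sg i) * (s i + 1) *)
Definition xsigma (alpha : R) (s : {perm 'I_n}) (sg : 'I_n -> bool) : 'rV[R]_n :=
  \row_i ((-1) ^+ sg i * alpha ^+ (s i).+1).

(* q is a c-monotone path of P (a sequence of vertices joined by edges,
   with c^T x strictly increasing); its length is (size q).-1 *)
Definition c_monotone_path (P : 'rV[R]_n -> Prop) (c : 'rV[R]_n)
  (q : seq 'rV[R]_n) : Prop :=
  forall i, (i.+1 < size q)%N ->
    is_edge P (nth 0 q i) (nth 0 q i.+1) /\ dotv c (nth 0 q i) < dotv c (nth 0 q i.+1).

End Polytopes.

(* Let e_j be the signed coordinate functional that sigma ranks j-th. As alpha >= k + 1,
   maximizing x_sigma over the lattice points of [0,k]^n maximizes e_(n-1), ..., e_0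
   lexicographically, so v is cut out by the chain of faces P = F_n, ..., F_0 = {v}
   where F_j is the face of F_(j+1) on which e_j is maximal. Climbing the chain, a
   c-maximal vertex of F_j becomes a c-maximal vertex of F_(j+1) by a shadow-vertex walk
   for the objectives c + lam e_j with decreasing lam: every edge of the walk increases
   c and strictly decreases the integral e_j, whose range is at most k, so at most k
   edges are used. Only the steps where F_j is a proper face of F_(j+1) need a walk,
   and each of them adds an affinely independent point, so there are at most d. *)

From HB Require Import structures.
From mathcomp Require Import all_boot all_order all_algebra all_fingroup.
From mathcomp Require Import ring lra.
Import Order.TTheory GRing.Theory Num.Theory.
Local Open Scope ring_scope.
Set Implicit Arguments. Unset Strict Implicit. Unset Printing Implicit Defensive.

Section DotProduct.
Variables (R : realFieldType) (n : nat).
Implicit Types (f g x y : 'rV[R]_n).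

Lemma dotvDr f x y : dotv f (x + y) = dotv f x + dotv f y.
Proof. by rewrite /dotv -big_split; apply: eq_bigr => i _; rewrite mxE mulrDr. Qed.

Lemma dotvZr f a x : dotv f (a *: x) = a * dotv f x.
Proof. by rewrite /dotv mulr_sumr; apply: eq_bigr => i _; rewrite mxE mulrCA. Qed.

Lemma dotvBr f x y : dotv f (x - y) = dotv f x - dotv f y.
Proof. by rewrite dotvDr -scaleN1r dotvZr mulN1r. Qed.

Lemma dotv0r f : dotv f 0 = 0.
Proof. by rewrite -(scale0r 0) dotvZr mul0r. Qed.

Lemma dotv_sumr f (I : finType) (F : I -> 'rV[R]_n) :
  dotv f (\sum_i F i) = \sum_i dotv f (F i).
Proof. exact: (big_morph (dotv f) (dotvDr f) (dotv0r f)). Qed.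

Lemma dotvDl f g x : dotv (f + g) x = dotv f x + dotv g x.
Proof. by rewrite /dotv -big_split; apply: eq_bigr => i _; rewrite mxE mulrDl. Qed.

Lemma dotvZl a f x : dotv (a *: f) x = a * dotv f x.
Proof. by rewrite /dotv mulr_sumr; apply: eq_bigr => i _; rewrite mxE mulrA. Qed.

Lemma dotv0l x : dotv 0 x = 0.
Proof. by rewrite -(scale0r 0) dotvZl mul0r. Qed.

Lemma dotv_delta j x : dotv (delta_mx 0 j) x = x 0 j.
Proof.
rewrite /dotv (bigD1 j) //= big1 ?mxE ?eqxx ?mul1r ?addr0 // => i /negbTE ij.
by rewrite mxE ij mul0r.
Qed.

Lemma dotv_self_gt0 x : x != 0 -> 0 < dotv x x.
Proof.
move=> x0; rewrite lt_def sumr_ge0 ?andbT => [|i _]; last exact: sqr_ge0.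
apply: contra x0 => /eqP/psumr_eq0P x2_0; apply/eqP/rowP => i; rewrite mxE.
by apply/eqP; rewrite -sqrf_eq0; apply/eqP/x2_0 => // j _; apply: sqr_ge0.
Qed.

End DotProduct.

Section ConvexHull.
Variables (R : realFieldType) (n : nat) (S : seq 'rV[R]_n).
Implicit Types (f u w x : 'rV[R]_n).

Lemma conv_hull_segment u w t : u \in S -> w \in S -> 0 <= t <= 1 ->
  conv_hull S ((1 - t) *: u + t *: w).
Proof.
move=> uS wS /andP[t0 t1].
pose iu := Ordinal (etrans (index_mem u S) uS).
pose iw := Ordinal (etrans (index_mem w S) wS).
have pick1 (V : zmodType) (a : 'I_(size S)) (F : 'I_(size S) -> V) :
    \sum_i (if i == a then F i else 0) = F a by rewrite -big_mkcond big_pred1_eq.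
exists (fun i => (if i == iu then 1 - t else 0) + (if i == iw then t else 0)).
split; [|split].
- by move=> i; apply: addr_ge0; case: ifP => // _; lra.
- by rewrite big_split /= !pick1; lra.
- under eq_bigr do rewrite scalerDl !(fun_if (fun a => a *: _)) !scale0r.
  by rewrite big_split /= !pick1 /= !nth_index.
Qed.

Lemma mem_conv_hull u : u \in S -> conv_hull S u.
Proof.
move=> uS; have := @conv_hull_segment u u 0 uS uS.
by rewrite subr0 scale0r addr0 scale1r lexx ler01; apply.
Qed.

Lemma conv_hull_le f m x : (forall s, s \in S -> dotv f s <= m) -> conv_hull S x ->
  dotv f x <= m.
Proof.
move=> fm [w [w0 [w1 ->]]]; rewrite dotv_sumr -[m]mul1r -w1 mulr_suml.
by apply: ler_sum => i _; rewrite dotvZr ler_wpM2l // fm // mem_nth.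
Qed.

Lemma conv_hull_support f m (w : 'I_(size S) -> R) :
  (forall s, s \in S -> dotv f s <= m) -> (forall i, 0 <= w i) -> \sum_i w i = 1 ->
  m <= dotv f (\sum_i w i *: S`_i) -> forall i, 0 < w i -> dotv f S`_i = m.
Proof.
move=> fm w0 w1 m_le i wi.
have gap_ge0 j : 0 <= w j * (m - dotv f S`_j) by rewrite mulr_ge0 ?subr_ge0 ?fm ?mem_nth.
have gap0 : \sum_j w j * (m - dotv f S`_j) = 0.
  apply/eqP; rewrite eq_le sumr_ge0 // andbT.
  under eq_bigr do rewrite mulrBr.
  rewrite sumrB -mulr_suml w1 mul1r subr_le0.
  by rewrite -(eq_bigr _ (fun j _ => dotvZr _ _ _)) -dotv_sumr.
have /eqP := @psumr_eq0P _ _ predT _ (fun j _ => gap_ge0 j) gap0 i isT.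
by rewrite mulf_eq0 subr_eq0 (gt_eqF wi) => /eqP.
Qed.

End ConvexHull.

Section Faces.
Variables (R : realFieldType) (n : nat) (S : seq 'rV[R]_n).
Implicit Types (c f g h u v w x y : 'rV[R]_n).

Definition on_face h x := forall y, y \in S -> dotv h y <= dotv h x.

Definition face_argmax h (F : 'rV[R]_n -> R) x :=
  on_face h x /\ forall y, y \in S -> on_face h y -> F y <= F x.

Definition exposed g v := v \in S /\ forall s, s \in S -> s != v -> dotv g s < dotv g v.

Lemma on_faceP h x : reflect (on_face h x) (all (fun y => dotv h y <= dotv h x) S).
Proof. exact: allP. Qed.

Lemma face_argmaxVbetter h (F : 'rV[R]_n -> R) w : on_face h w ->
  face_argmax h F w \/ exists2 s, s \in S & on_face h s /\ F w < F s.
Proof.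
move=> hw; have [/hasP[s sS /andP[/on_faceP hs ws]]|/hasPn best] :=
  boolP (has (fun s => all (fun y => dotv h y <= dotv h s) S && (F w < F s)) S).
  by right; exists s.
left; split=> // y yS hy; rewrite leNgt; apply: contra (best y yS) => lt.
by rewrite lt andbT; apply/on_faceP.
Qed.

Lemma on_face_conv_hull h x y : on_face h x -> conv_hull S y -> dotv h y <= dotv h x.
Proof. exact: conv_hull_le. Qed.

Lemma exposed_on_face g v : exposed g v -> on_face g v.
Proof. by move=> [_ gv] s sS; case: (eqVneq s v) => [->//|/(gv s sS)/ltW]. Qed.

Lemma exposed_is_vertex g v : exposed g v -> is_vertex (conv_hull S) v.
Proof.
move=> expv; have [vS gv] := expv; have vmax := exposed_on_face expv.
exists g => x; split=> [[[w [w0 [w1 xE]]] xmax] | ->]; last first.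
  by split=> [|y /(on_face_conv_hull vmax)//]; apply: mem_conv_hull.
have vx : dotv g v <= dotv g (\sum_i w i *: S`_i) by rewrite -xE; apply/xmax/mem_conv_hull.
have Sv i : w i *: S`_i = w i *: v.
  have := w0 i; rewrite le_eqVlt => /predU1P[<-|wi]; first by rewrite !scale0r.
  congr (_ *: _); apply/eqP; apply: contraT => /(gv _ (mem_nth 0 (ltn_ord i))).
  by rewrite (conv_hull_support vmax w0 w1 vx wi) ltxx.
by rewrite xE (eq_bigr _ (fun i _ => Sv i)) -scaler_suml w1 scale1r.
Qed.

Lemma is_vertex_mem v : is_vertex (conv_hull S) v -> v \in S.
Proof.
move=> [c vc]; have [[w [w0 [w1 vE]]] vmax] := (vc v).2 erefl.
have cmax : on_face c v by move=> s sS; apply/vmax/mem_conv_hull.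
have [i wi] : exists i, 0 < w i.
  apply/existsP; apply: contraT; rewrite negb_exists => /forallP w_le0.
  suff : \sum_i w i <= 0 by rewrite w1 ler10.
  by apply: sumr_le0 => i _; rewrite leNgt w_le0.
have cv : dotv c v <= dotv c (\sum_i w i *: S`_i) by rewrite -vE.
suff <- : S`_i = v by apply: mem_nth.
apply/(vc _).1; split=> [|y Py]; first exact/mem_conv_hull/mem_nth.
by rewrite (conv_hull_support cmax w0 w1 cv wi) vmax.
Qed.

Lemma face_segment_is_edge f u w : u \in S -> w \in S -> u != w ->
  on_face f u -> on_face f w ->
  (forall s, s \in S -> on_face f s -> exists t, 0 <= t <= 1 /\ s = (1 - t) *: u + t *: w) ->
  is_edge (conv_hull S) u w.
Proof.
move=> uS wS uw fu fw seg; split; first exact/eqP.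
have fwu : dotv f w = dotv f u by apply/eqP; rewrite eq_le fu ?fw.
exists f => x; split=> [[[a [a0 [a1 xE]]] xmax] | [t [t01 ->]]]; last first.
  split=> [|y]; first exact: conv_hull_segment.
  apply: conv_hull_le => s sS; rewrite dotvDr !dotvZr fwu.
  by have := fu s sS; lra.
have ux : dotv f u <= dotv f (\sum_i a i *: S`_i) by rewrite -xE; apply/xmax/mem_conv_hull.
have /fin_all_exists [t tP] i :
    exists t, 0 <= t <= 1 /\ a i *: S`_i = a i *: ((1 - t) *: u + t *: w).
  have := a0 i; rewrite le_eqVlt => /predU1P[<-|ai].
    by exists 0; rewrite lexx ler01 !scale0r.
  have [|t [t01 Si]] := seg _ (mem_nth 0 (ltn_ord i)); last by exists t; rewrite -Si.
  by move=> y yS; rewrite (conv_hull_support fu a0 a1 ux ai) fu.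
exists (\sum_i a i * t i); split.
  rewrite sumr_ge0 => [|i _]; last by rewrite mulr_ge0 //; case/andP: (tP i).1.
  rewrite -a1 ler_sum // => i _; rewrite ler_piMr //; by case/andP: (tP i).1.
rewrite xE (eq_bigr _ (fun i _ => (tP i).2)).
under eq_bigr do rewrite scalerDr !scalerA.
rewrite big_split /= -!scaler_suml; congr (_ *: _ + _).
by rewrite -{2}a1 -sumrB; apply: eq_bigr => i _; ring.
Qed.

End Faces.

Section LexCombine.
Variables (R : realFieldType) (T : eqType).
Implicit Types (X : seq T) (F G : T -> R).

Lemma seq_argmax X F : X != [::] -> exists2 x, x \in X & forall y, y \in X -> F y <= F x.
Proof.
elim: X => // a X IH _; case: (eqVneq X [::]) => [->|/IH[x xX xmax]].
  by exists a => [|y]; rewrite mem_seq1 // => /eqP->.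
have [ax|xa] := leP (F a) (F x).
  exists x => [|y]; first by rewrite inE xX orbT.
  by rewrite inE => /predU1P[->|/xmax].
exists a => [|y]; first by rewrite inE eqxx.
by rewrite inE => /predU1P[->//|/xmax/le_trans]; apply; apply: ltW.
Qed.

Lemma seq_ub X F : exists M, 0 < M /\ forall y, y \in X -> F y < M.
Proof.
elim: X => [|a X [M [M0 ltM]]]; first by exists 1; split.
exists (M + `|F a| + 1); split; first by have := normr_ge0 (F a); lra.
move=> y /[!inE] /predU1P[->|/ltM]; first by have := ler_norm (F a); lra.
by have := normr_ge0 (F a); lra.
Qed.

Lemma lex_combine X F G : exists M, 0 < M /\ forall x, x \in X ->
  ((forall y, y \in X -> G y + M * F y <= G x + M * F x) <->
   (forall y, y \in X -> F y <= F x) /\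
   (forall y, y \in X -> (forall z, z \in X -> F z <= F y) -> G y <= G x)).
Proof.
case: (eqVneq X [::]) => [->|XN]; first by exists 1; split.
have [xF xFX xFmax] := seq_argmax F XN.
have /(seq_argmax G)[xG] : [seq y <- X | F y == F xF] != [::].
  by apply/eqP => /(congr1 (fun s => xF \in s)); rewrite mem_filter eqxx xFX.
rewrite mem_filter => /andP[/eqP FxG xGX] xGmax.
have [M [M0 ltM]] := seq_ub X (fun y => (G y - G xG) / (F xF - F y)).
have below y : y \in X -> F y < F xF -> G y + M * F y < G xG + M * F xF.
  move=> yX Fy; have := ltM _ yX; rewrite /= ltr_pdivrMr ?subr_gt0 // mulrC; lra.
have Fmax y : y \in X -> (forall z, z \in X -> F z <= F y) -> F y = F xF.
  by move=> yX ymax; apply/eqP; rewrite eq_le xFmax ?ymax.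
exists M; split => // x xX; split=> [xmax | [xFm xGm]].
  have FxF : F x = F xF.
    apply/eqP; rewrite eq_le xFmax // leNgt; apply/negP => /(below _ xX).
    by have := xmax _ xGX; rewrite FxG; lra.
  split=> [y yX|y yX ymax]; first by rewrite FxF xFmax.
  by have := xmax _ yX; rewrite FxF (Fmax _ yX ymax); lra.
have FxF := Fmax _ xX xFm.
have GxG : G x = G xG.
  apply/eqP; rewrite eq_le xGmax ?mem_filter ?FxF ?eqxx ?xX // xGm // => z zX.
  by rewrite FxG xFmax.
move=> y yX; have := xFmax _ yX; rewrite le_eqVlt => /predU1P[Fy|/(below _ yX)].
  have : G y <= G x by apply: xGm => // z zX; rewrite Fy xFmax.
  by rewrite FxF Fy; lra.
by rewrite FxF GxG; lra.
Qed.

End LexCombine.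

Section FaceRefinement.
Variables (R : realFieldType) (n : nat) (S : seq 'rV[R]_n).
Implicit Types (f g h x : 'rV[R]_n).

Lemma refine_face h g : exists M, 0 < M /\ forall x, x \in S ->
  (on_face S (g + M *: h) x <-> face_argmax S h (dotv g) x).
Proof.
have [M [M0 HM]] := lex_combine S (dotv h) (dotv g).
exists M; split => // x xS; rewrite /face_argmax /on_face -HM //.
by split=> xmax y yS; have := xmax y yS; rewrite !dotvDl !dotvZl.
Qed.

Lemma face_lex_combine h f g : exists M, 0 < M /\ forall x, x \in S ->
  face_argmax S h (dotv f) x ->
  (forall y, y \in S -> face_argmax S h (dotv f) y -> dotv g y <= dotv g x) ->
  face_argmax S h (dotv (g + M *: f)) x.
Proof.
pose X := [seq y <- S | all (fun z => dotv h z <= dotv h y) S].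
have memX y : y \in X <-> y \in S /\ on_face S h y.
  by rewrite mem_filter andbC; split=> [/andP[-> /on_faceP]|[-> /on_faceP]].
have [M [M0 HM]] := lex_combine X (dotv f) (dotv g).
exists M; split => // x xS [hx fx] gx.
have xX : x \in X by apply/memX.
have xmax : forall y, y \in X -> dotv g y + M * dotv f y <= dotv g x + M * dotv f x.
  apply/(HM x xX); split=> [y /memX[yS hy]|y /memX[yS hy] ymax]; first exact: fx.
  by apply: gx => //; split=> // z zS hz; apply/ymax/memX.
by split=> // y yS hy; rewrite !dotvDl !dotvZl; apply/xmax/memX.
Qed.

(* Ties of [f] are broken lexicographically by the coordinates, leaving one maximizer. *)
Lemma exposed_argmax f : S != [::] -> exists2 p, on_face S f p & exists phi, exposed S phi p.
Proof.
move=> SN.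
have lex_coords m : (m <= n)%N -> exists phi,
    (forall q, q \in S -> on_face S phi q -> on_face S f q) /\
    (forall q q', q \in S -> q' \in S -> on_face S phi q -> on_face S phi q' ->
       forall j : 'I_n, (j < m)%N -> q 0 j = q' 0 j).
  elim: m => [_|m IH mn]; first by exists f.
  have [phi [phi_f phi_eq]] := IH (ltnW mn).
  have [M [M0 HM]] := refine_face phi (delta_mx 0 (Ordinal mn)).
  exists (delta_mx 0 (Ordinal mn) + M *: phi).
  split=> [q qS /(HM q qS)[hq _]|q q' qS q'S]; first exact: phi_f.
  move=> /(HM q qS)[hq qmax] /(HM q' q'S)[hq' q'max] j.
  rewrite ltnS leq_eqVlt => /predU1P[jm|]; last exact: phi_eq.
  have -> : j = Ordinal mn by apply: val_inj.
  have := qmax _ q'S hq'; have := q'max _ qS hq; rewrite !dotv_delta => le1 le2.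
  by apply/eqP; rewrite eq_le le1 le2.
have [phi [phi_f phi_eq]] := lex_coords n (leqnn n).
have [p pS pmax] := seq_argmax (dotv phi) SN.
exists p; first exact: phi_f.
exists phi; split => // s sS sp; rewrite lt_neqAle pmax // andbT.
apply: contra sp => /eqP same; apply/eqP/rowP => j.
apply: (phi_eq s p) => // y yS.
by rewrite same; apply: pmax.
Qed.

End FaceRefinement.

Section SimplexStep.
Variables (R : realFieldType) (n : nat) (S : seq 'rV[R]_n).
Implicit Types (d f g h u w : 'rV[R]_n).

(* The edge ends at the generator farthest along [d], which [d + M psi] exposes. *)
Lemma ray_face_edge psi u d : u \in S -> on_face S psi u ->
  (forall s, s \in S -> on_face S psi s -> exists2 t, 0 <= t & s = u + t *: d) ->
  (exists2 s, s \in S & on_face S psi s /\ s != u) ->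
  exists w, [/\ w \in S, on_face S psi w, is_edge (conv_hull S) u w,
    exists g, exposed S g w & exists2 t, 0 < t & w = u + t *: d].
Proof.
move=> uS psiu ray [s0 s0S [psis0 s0u]].
have [t0 t00 s0E] := ray _ s0S psis0.
have t0_gt0 : 0 < t0.
  by rewrite lt_def t00 andbT; apply: contra s0u => /eqP t0_0; rewrite s0E t0_0 scale0r addr0.
have dd_gt0 : 0 < dotv d d.
  by apply: dotv_self_gt0; apply: contra s0u => /eqP d0; rewrite s0E d0 scaler0 addr0.
have along t : dotv d (u + t *: d) = dotv d u + t * dotv d d by rewrite dotvDr dotvZr.
have [M [M0 HM]] := refine_face S psi d.
have /(seq_argmax (dotv (d + M *: psi)))[w wS wmax] : S != [::].
  by apply: contraTneq uS => ->.
have [psiw dw] := (HM w wS).1 wmax.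
have [tw tw0 wE] := ray _ wS psiw.
have t0_tw : t0 <= tw by have := dw _ s0S psis0; rewrite s0E wE !along lerD2l ler_pM2r.
exists w; split=> //; last by exists tw => //; apply: lt_le_trans t0_tw.
- apply: (face_segment_is_edge (f := psi) uS wS) => //.
    apply/eqP => /(congr1 (dotv d)); rewrite wE along.
    by have := mulr_gt0 (lt_le_trans t0_gt0 t0_tw) dd_gt0; lra.
  move=> s sS psis; have [ts ts0 sE] := ray _ sS psis.
  have ts_tw : ts <= tw by have := dw _ sS psis; rewrite sE wE !along lerD2l ler_pM2r.
  have tw_neq0 : tw != 0 by rewrite gt_eqF // (lt_le_trans t0_gt0 t0_tw).
  exists (ts / tw); split.
    by rewrite divr_ge0 // ler_pdivrMr ?mul1r // (lt_le_trans t0_gt0 t0_tw).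
  by rewrite sE wE scalerDr scalerA divfK // scalerBl scale1r addrA subrK.
- exists (d + M *: psi); split => // s sS sw; rewrite lt_neqAle wmax // andbT.
  apply: contra sw => /eqP same.
  have [psis ds] : face_argmax S psi (dotv d) s.
    by apply/(HM s sS) => y yS; rewrite same; apply: wmax.
  have [ts _ sE] := ray _ sS psis.
  have : dotv d s = dotv d w by apply/eqP; rewrite eq_le dw // ds.
  by rewrite sE wE !along => /addrI/(mulIf (lt0r_neq0 dd_gt0)) ->.
Qed.

(* Scaled by [g], the directions [s - u] of the face become points [dir s] of the
   hyperplane [g = -1]; an [f]-best such point [p] exposed by [phi] spans an extreme
   ray of the cone of the face at [u], and [phi + (phi p) g] exposes that ray. *)
Lemma improving_ray h g f u s0 :
  exposed S g u -> on_face S h u -> s0 \in S -> on_face S h s0 -> dotv f u < dotv f s0 ->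
  exists psi d, [/\ 0 < dotv f d, on_face S psi u,
    forall s, s \in S -> on_face S psi s -> on_face S h s /\ exists2 t, 0 <= t & s = u + t *: d
    & exists2 s, s \in S & on_face S psi s /\ s != u].
Proof.
move=> [uS gu] hu s0S hs0 fs0.
pose del s := dotv g u - dotv g s.
pose dir s := (del s)^-1 *: (s - u).
pose T := [seq s <- S | (s != u) && all (fun y => dotv h y <= dotv h s) S].
have memT s : s \in T <-> [/\ s \in S, s != u & on_face S h s].
  by rewrite mem_filter andbC; split=> [/and3P[-> -> /on_faceP]|[-> -> /on_faceP ->]].
have del_gt0 s : s \in S -> s != u -> 0 < del s by move=> sS su; rewrite subr_gt0 gu.
have dirK s : s \in S -> s != u -> s = u + del s *: dir s.
  by move=> sS su; rewrite scalerA mulfV ?gt_eqF ?del_gt0 // scale1r addrC subrK.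
have s0u : s0 != u by apply: contraTneq fs0 => ->; rewrite ltxx.
have s0T : s0 \in T by apply/memT.
have /(exposed_argmax f)[p pmax [phi phip]] : [seq dir s | s <- T] != [::].
  by apply: contraTneq (map_f dir s0T) => ->.
have [s1 s1T pE] : exists2 s1, s1 \in T & p = dir s1 by apply/mapP; case: phip.
pose psi := phi + dotv phi p *: g.
have psi_gap s : s \in S -> s != u ->
    dotv psi s - dotv psi u = del s * (dotv phi (dir s) - dotv phi p).
  by move=> sS su; rewrite !dotvDl !dotvZl {1}(dirK s sS su) dotvDr dotvZr /del; ring.
have psi_le_u s : s \in S -> on_face S h s -> dotv psi s <= dotv psi u.
  move=> sS hs; case: (eqVneq s u) => [->//|su].
  rewrite -subr_le0 psi_gap // pmulr_rle0 ?del_gt0 // subr_le0.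
  by apply: (exposed_on_face phip); rewrite map_f //; apply/memT.
have [M [M0 HM]] := refine_face S h psi.
have [s1S s1u hs1] := (memT s1).1 s1T.
exists (psi + M *: h), p; split.
- apply: lt_le_trans (pmax _ (map_f dir s0T)).
  by rewrite dotvZr dotvBr mulr_gt0 ?invr_gt0 ?del_gt0 ?subr_gt0.
- by apply/HM.
- move=> s sS /(HM s sS)[hs smax]; split=> //.
  case: (eqVneq s u) => [->|su]; first by exists 0; rewrite ?scale0r ?addr0.
  exists (del s); first exact/ltW/del_gt0.
  suff <- : dir s = p by apply: dirK.
  apply/eqP; apply: contraT => /(phip.2 _ (map_f _ ((memT s).2 (And3 sS su hs)))) lt_p.
  have := smax u uS hu; rewrite -subr_ge0 psi_gap // pmulr_rge0 ?del_gt0 //.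
  by rewrite subr_ge0 leNgt lt_p.
- exists s1 => //; split=> //; apply/HM => //; split=> // y yS hy.
  by apply: le_trans (psi_le_u y yS hy) _; rewrite -subr_ge0 psi_gap // -pE subrr mulr0.
Qed.

Lemma improving_edge h g f u s0 :
  exposed S g u -> on_face S h u -> s0 \in S -> on_face S h s0 -> dotv f u < dotv f s0 ->
  exists w, [/\ w \in S, on_face S h w, dotv f u < dotv f w,
    is_edge (conv_hull S) u w & exists g', exposed S g' w].
Proof.
move=> gu hu s0S hs0 fs0.
have [psi [d [fd psiu ray ex]]] := improving_ray gu hu s0S hs0 fs0.
have uS : u \in S by case: gu.
have ray' s : s \in S -> on_face S psi s -> exists2 t, 0 <= t & s = u + t *: d.
  by move=> sS /(ray s sS)[].
have [w [wS psiw uw gw [t t0 wE]]] := ray_face_edge uS psiu ray' ex.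
exists w; split=> //; first by have [] := ray w wS psiw.
by rewrite wE dotvDr dotvZr ltrDl mulr_gt0.
Qed.

End SimplexStep.

Section MonotonePaths.
Variables (R : realFieldType) (n : nat).
Implicit Types (P : 'rV[R]_n -> Prop) (c w : 'rV[R]_n) (q : seq 'rV[R]_n).

Lemma c_monotone_path_cons P c w w' q :
  is_edge P w w' -> dotv c w < dotv c w' -> c_monotone_path P c (w' :: q) ->
  c_monotone_path P c (w :: w' :: q).
Proof. by move=> ww' cw' path_q [|i] /= i_lt; [split | apply: path_q]. Qed.

Lemma c_monotone_path_cat P c w q1 q2 :
  c_monotone_path P c (w :: q1) -> c_monotone_path P c (last w q1 :: q2) ->
  c_monotone_path P c (w :: q1 ++ q2).
Proof.
elim: q1 w => [|w' q1 IH] w //= path1 path2.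
have [ww' cw'] := path1 0%N isT.
by apply: c_monotone_path_cons => //; apply: IH => // i; apply: (path1 i.+1).
Qed.

End MonotonePaths.

Section ParametricDescent.
Variables (R : realFieldType) (n : nat) (S : seq 'rV[R]_n).
Implicit Types (c e g h w : 'rV[R]_n).

Definition path_to_face_max h c w (len : nat) := exists q,
  [/\ c_monotone_path (conv_hull S) c (w :: q), exists g, exposed S g (last w q),
      face_argmax S h (dotv c) (last w q) & (size q <= len)%N].

Lemma path_to_face_max_refl h c w len : (exists g, exposed S g w) ->
  face_argmax S h (dotv c) w -> path_to_face_max h c w len.
Proof. by move=> gw wmax; exists [::]; split=> // i. Qed.

Lemma path_to_face_max_singleton h c v len : v \in S -> on_face S h v ->
  (forall y, y \in S -> on_face S h y -> y = v) -> path_to_face_max h c v len.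
Proof.
move=> vS hv only_v; apply: path_to_face_max_refl; last first.
  by split=> // y yS /(only_v y yS) ->.
exists h; split=> // s sS sv; rewrite lt_neqAle hv // andbT.
apply: contra sv => /eqP same; apply/eqP/only_v => // y yS.
by rewrite same; apply: hv.
Qed.

Lemma path_to_face_max_eq_face h h' c w len :
  (forall x, x \in S -> on_face S h x <-> on_face S h' x) ->
  path_to_face_max h' c w len -> path_to_face_max h c w len.
Proof.
move=> hh' [q [path_q gq [h'q qmax] len_q]]; have qS : last w q \in S by case: gq => ? [].
exists q; split=> //; split=> [|y yS /(hh' y yS)]; [exact/hh' | exact: qmax].
Qed.

Lemma path_to_face_max_cat h h' c w len1 len2 :
  path_to_face_max h' c w len1 ->
  (forall w', (exists g, exposed S g w') -> face_argmax S h' (dotv c) w' ->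
     path_to_face_max h c w' len2) ->
  path_to_face_max h c w (len1 + len2).
Proof.
move=> [q1 [path1 g1 max1 len_q1]] /(_ _ g1 max1) [q2 [path2 g2 max2 len_q2]].
exists (q1 ++ q2); rewrite last_cat size_cat; split=> //; last exact: leq_add.
exact: c_monotone_path_cat.
Qed.

(* [lam'] is the largest ratio of gain in [c] to loss in [e] over the face. *)
Lemma critical_multiplier h c e w lam :
  face_argmax S h (dotv (c + lam *: e)) w -> 0 < lam ->
  (exists2 s, s \in S & on_face S h s /\ dotv c w < dotv c s) ->
  exists2 lam', 0 < lam' & face_argmax S h (dotv (c + lam' *: e)) w /\
    exists2 s, s \in S & [/\ on_face S h s, dotv c w < dotv c s &
      dotv (c + lam' *: e) s = dotv (c + lam' *: e) w].
Proof.
move=> [hw wmax] lam0 [s sS [hs cs]].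
have gain y : y \in S -> on_face S h y -> dotv c y - dotv c w <= lam * (dotv e w - dotv e y).
  by move=> yS hy; have := wmax y yS hy; rewrite !dotvDl !dotvZl; lra.
pose ratio y := (dotv c y - dotv c w) / (dotv e w - dotv e y).
pose L := [seq y <- S | all (fun z => dotv h z <= dotv h y) S && (dotv e y < dotv e w)].
have memL y : y \in L <-> [/\ y \in S, on_face S h y & dotv e y < dotv e w].
  by rewrite mem_filter andbC; split=> [/and3P[? /on_faceP ? ?]|[-> /on_faceP -> ->]].
have es : dotv e s < dotv e w.
  by rewrite -subr_gt0 -(pmulr_rgt0 _ lam0); have := gain s sS hs; lra.
have sL : s \in L by apply/memL.
have /(seq_argmax ratio)[sm /memL[smS hsm esm] smax] : L != [::] by apply: contraTneq sL => ->.
set lam' := ratio sm in smax *.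
have ratio_s : 0 < ratio s by rewrite divr_gt0 ?subr_gt0.
have lam'0 : 0 < lam' := lt_le_trans ratio_s (smax _ sL).
have lam'_le : lam' <= lam by rewrite ler_pdivrMr ?subr_gt0 ?gain.
have csm : dotv c sm - dotv c w = lam' * (dotv e w - dotv e sm).
  by rewrite /lam' /ratio divfK // subr_eq0 gt_eqF.
exists lam' => //; split.
  split=> // y yS hy; rewrite !dotvDl !dotvZl.
  have [ey|ey] := ltP (dotv e y) (dotv e w).
    have := smax y (iffRL (memL y) (And3 yS hy ey)).
    by rewrite /ratio ler_pdivrMr ?subr_gt0 //; lra.
  have := gain y yS hy; have : (lam - lam') * (dotv e w - dotv e y) <= 0.
    by rewrite mulr_ge0_le0 // ?subr_ge0 ?subr_le0.
  lra.
exists sm => //; split => //; last by rewrite !dotvDl !dotvZl; lra.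
have : 0 < lam' * (dotv e w - dotv e sm) by rewrite mulr_gt0 ?subr_gt0.
lra.
Qed.

Lemma parametric_step h c e w lam :
  (exists g, exposed S g w) -> face_argmax S h (dotv (c + lam *: e)) w -> 0 < lam ->
  (exists2 s, s \in S & on_face S h s /\ dotv c w < dotv c s) ->
  exists w' lam', [/\ exists g, exposed S g w', face_argmax S h (dotv (c + lam' *: e)) w',
    0 < lam', is_edge (conv_hull S) w w' & dotv c w < dotv c w' /\ dotv e w' < dotv e w].
Proof.
move=> [g gw] wopt lam0 better; have wS : w \in S by case: gw.
have [lam' lam'0 [wopt' [s sS [hs cs tie]]]] := critical_multiplier wopt lam0 better.
have [M [M0 HM]] := refine_face S h (c + lam' *: e).
have hw : on_face S (c + lam' *: e + M *: h) w by apply/HM.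
have hs' : on_face S (c + lam' *: e + M *: h) s.
  by apply/HM => //; split=> // y yS hy; rewrite tie; apply: wopt'.2.
have [w' [w'S hw' cw' ww' gw']] := improving_edge gw hw sS hs' cs.
have w'opt := (HM w' w'S).1 hw'.
exists w', lam'; split=> //; split=> //.
have := w'opt.2 w wS wopt'.1; have := wopt'.2 w' w'S w'opt.1.
rewrite !dotvDl !dotvZl => le1 le2.
have : lam' * (dotv e w' - dotv e w) < 0 by lra.
by rewrite pmulr_rlt0 // subr_lt0.
Qed.

(* Shadow-vertex descent: while lowering the weight of [e], every step strictly
   decreases the integral objective [e], so at most [N] steps are made. *)
Lemma parametric_descent h c e :
  (forall s s', s \in S -> s' \in S -> dotv e s' < dotv e s -> dotv e s' + 1 <= dotv e s) ->
  forall (N : nat) w lam, (exists g, exposed S g w) ->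
  face_argmax S h (dotv (c + lam *: e)) w -> 0 < lam ->
  (forall s, s \in S -> on_face S h s -> dotv e w - dotv e s <= N%:R) ->
  path_to_face_max h c w N.
Proof.
move=> e_int N; elim: N => [|N IH] w lam gw wopt lam0 gap.
all: have [wmax|better] := face_argmaxVbetter (dotv c) wopt.1;
  first exact: path_to_face_max_refl.
all: have [w' [lam' [gw' w'opt lam'0 ww' [cw' ew']]]] := parametric_step gw wopt lam0 better.
all: have [wS w'S] : w \in S /\ w' \in S by case: gw => ? [? _]; case: gw' => ? [? _].
- by have := e_int _ _ wS w'S ew'; have := gap w' w'S w'opt.1; lra.
- have gap' s : s \in S -> on_face S h s -> dotv e w' - dotv e s <= N%:R.
    by move=> sS hs; have := gap s sS hs; have := e_int _ _ wS w'S ew'; rewrite -natr1; lra.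
  have [q [path_q gq maxq len_q]] := IH w' lam' gw' w'opt lam'0 gap'.
  by exists (w' :: q); split=> //; apply: c_monotone_path_cons.
Qed.

Lemma face_descent h h' c e (k : nat) w :
  (forall s s', s \in S -> s' \in S -> dotv e s' < dotv e s -> dotv e s' + 1 <= dotv e s) ->
  (forall s s', s \in S -> s' \in S -> dotv e s - dotv e s' <= k%:R) ->
  (forall x, x \in S -> on_face S h' x <-> face_argmax S h (dotv e) x) ->
  (exists g, exposed S g w) -> face_argmax S h' (dotv c) w -> path_to_face_max h c w k.
Proof.
move=> e_int e_range hh' gw [h'w wmax]; have wS : w \in S by case: gw => ? [].
have [M [M0 HM]] := face_lex_combine S h e c.
apply: (parametric_descent e_int gw _ M0) => [|s sS _]; last exact: e_range.
by apply: HM => [||y yS /(hh' y yS)/(wmax y yS)] //; apply/hh'.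
Qed.

End ParametricDescent.

Section AffineDimension.
Variables (R : realFieldType) (n : nat).
Implicit Types (f v x : 'rV[R]_n) (X ys : seq 'rV[R]_n).

Lemma free_cons_dotv f x X : (forall y, y \in X -> dotv f y = 0) -> dotv f x != 0 ->
  free X -> free (x :: X).
Proof.
move=> fX fx freeX; rewrite free_cons freeX andbT; apply: contra fx.
move=> /(@coord_span _ _ _ (in_tuple X)) ->.
by rewrite dotv_sumr big1 // => i _; rewrite dotvZr fX ?mulr0 // mem_nth.
Qed.

Lemma free_le_dim (P : 'rV[R]_n -> Prop) d v ys :
  polytope_dim P d -> P v -> (forall y, y \in ys -> P y) ->
  free [seq y - v | y <- ys] -> (size ys <= d)%N.
Proof.
move=> [_ no_indep] Pv Pys free_ys; rewrite leqNgt; apply/negP => d_lt.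
pose p (i : 'I_d.+2) := if unlift ord0 i is Some i' then ys`_i' else v.
have Pp i : P (p i).
  rewrite /p; case: unliftP => [i' _|_]; last exact: Pv.
  exact/Pys/mem_nth/(leq_trans (ltn_ord i') d_lt).
apply: (negP (no_indep p Pp)).
pose X := [seq y - v | y <- ys].
have sz : size (take d.+1 X) == d.+1 by rewrite size_takel ?size_map.
have /(@freeP _ _ _ (Tuple sz)) t_free : free (take d.+1 X).
  by apply: (catl_free (Y := drop d.+1 X)); rewrite cat_take_drop.
apply/inj_row_free => a aM0; apply/rowP => i; rewrite mxE.
apply: (t_free (fun i => a 0 i)); apply/rowP => j.
rewrite -[RHS](congr1 (fun A : 'rV[R]_n => A 0 j) aM0) summxE !mxE; apply: eq_bigr => i' _.
rewrite !mxE /p liftK unlift_none /= nth_take // (nth_map 0) ?mxE //.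
exact: leq_trans (ltn_ord i') d_lt.
Qed.

End AffineDimension.

Section LexMaxVertex.
Variables (R : realFieldType) (n m k : nat) (S : seq 'rV[R]_n).
Variables (e : 'I_m -> 'rV[R]_n) (v : 'rV[R]_n).
Hypothesis vS : v \in S.
Hypothesis e_int : forall l s s', s \in S -> s' \in S ->
  dotv (e l) s' < dotv (e l) s -> dotv (e l) s' + 1 <= dotv (e l) s.
Hypothesis e_range : forall l s s', s \in S -> s' \in S -> dotv (e l) s - dotv (e l) s' <= k%:R.
Hypothesis v_lexmax : forall (l : 'I_m) y, y \in S ->
  (forall l' : 'I_m, (l < l')%N -> dotv (e l') y = dotv (e l') v) -> dotv (e l) y <= dotv (e l) v.
Hypothesis e_separating : forall y, y \in S -> (forall l, dotv (e l) y = dotv (e l) v) -> y = v.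

(* Refining the face of [h] by [e (j-1)], ..., [e 0] ends at the vertex [v]; each
   refinement that changes the face adds a dimension and at most [k] edges. *)
Lemma lex_face_paths j : (j <= m)%N -> forall h, on_face S h v ->
  (forall y, y \in S -> on_face S h y ->
     forall l : 'I_m, (j <= l)%N -> dotv (e l) y = dotv (e l) v) ->
  exists ys, [/\ forall y, y \in ys -> y \in S /\ on_face S h y,
    free [seq y - v | y <- ys] & forall c, path_to_face_max S h c v (size ys * k)].
Proof.
elim: j => [|j IH] jm h hv agree.
  exists [::]; split=> // [|c]; first exact: nil_free.
  apply: path_to_face_max_singleton => // y yS hy.
  by apply: e_separating => // l; apply: agree.
pose l := Ordinal jm.
have [M [M0 HM]] := refine_face S h (e l).
have vmax : face_argmax S h (dotv (e l)) v.
  by split=> // y yS hy; apply: v_lexmax => // l' ll'; apply: agree.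
have el_v y : y \in S -> on_face S (e l + M *: h) y -> dotv (e l) y = dotv (e l) v.
  by move=> yS /(HM y yS)[hy ymax]; apply/eqP; rewrite eq_le ymax // vmax.2.
have agree' y : y \in S -> on_face S (e l + M *: h) y ->
    forall l' : 'I_m, (j <= l')%N -> dotv (e l') y = dotv (e l') v.
  move=> yS h'y l'; rewrite leq_eqVlt => /predU1P[jl'|jl']; last first.
    by apply: agree => //; case: ((HM y yS).1 h'y).
  by rewrite (_ : l' = l) ?el_v //; apply: val_inj.
have [ys [ys_h' free_ys paths]] := IH (ltnW jm) _ ((HM v vS).2 vmax) agree'.
have [/hasP[y0 y0S /andP[/on_faceP hy0 ey0]]|/hasPn flat] :=
  boolP (has (fun y => all (fun z => dotv h z <= dotv h y) S &&
                        (dotv (e l) y != dotv (e l) v)) S).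
- exists (y0 :: ys); split.
  + by move=> y; rewrite inE => /predU1P[->|/ys_h'[yS /(HM y yS)[]]].
  + apply: (@free_cons_dotv _ _ (e l)); rewrite ?dotvBr ?subr_eq0 //.
    by move=> _ /mapP[y /ys_h'[yS h'y] ->]; rewrite dotvBr el_v ?subrr.
  + move=> c; rewrite /= mulSn addnC; apply: (path_to_face_max_cat (paths c)) => w gw wmax.
    exact: face_descent (@e_int l) (@e_range l) (fun x xS => HM x xS) gw wmax.
- have flat_v y : y \in S -> on_face S h y -> dotv (e l) y = dotv (e l) v.
    by move=> yS /on_faceP hy; apply/eqP; move: (flat y yS); rewrite hy negbK.
  exists ys; split=> [y /ys_h'[yS /(HM y yS)[]]|//|c] //.
  apply: path_to_face_max_eq_face (paths c) => x xS.
  split=> [hx|/(HM x xS)[]//]; apply/HM => //.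
  by split=> // y yS hy; rewrite !flat_v.
Qed.

Lemma lex_max_vertex_paths : exists ys, [/\ {subset ys <= S},
  free [seq y - v | y <- ys] & forall c, path_to_face_max S 0 c v (size ys * k)].
Proof.
have face0 : on_face S 0 v by move=> y _; rewrite !dotv0l.
have agree0 y : y \in S -> on_face S 0 y ->
    forall l : 'I_m, (m <= l)%N -> dotv (e l) y = dotv (e l) v.
  by move=> _ _ l; rewrite leqNgt ltn_ord.
have [ys [ys_S free_ys paths]] := lex_face_paths (leqnn m) face0 agree0.
by exists ys; split=> // y /ys_S[].
Qed.

End LexMaxVertex.

Section SignedPermutation.
Variables (R : realFieldType) (n k : nat) (S : seq 'rV[R]_n) (sg : 'I_n -> bool).
Hypothesis S_box : lattice_in_box k S.

Definition signed_unit (i : 'I_n) : 'rV[R]_n := (-1) ^+ sg i *: delta_mx 0 i.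

Lemma dotv_signed_unit i x : dotv (signed_unit i) x = (-1) ^+ sg i * x 0 i.
Proof. by rewrite dotvZl dotv_delta. Qed.

Lemma signed_unit_int i x y : x \in S -> y \in S ->
  dotv (signed_unit i) y < dotv (signed_unit i) x ->
  dotv (signed_unit i) y + 1 <= dotv (signed_unit i) x.
Proof.
move=> xS yS; rewrite !dotv_signed_unit.
have [a [_ ->]] := S_box xS i; have [b [_ ->]] := S_box yS i.
case: (sg i); rewrite ?expr1 ?expr0 ?mulN1r ?mul1r => lt.
  have : (a < b)%N by rewrite -(ltr_nat R); lra.
  by rewrite -(ler_nat R) -natr1 => ?; lra.
have : (b < a)%N by rewrite -(ltr_nat R).
by rewrite -(ler_nat R) -natr1 => ?; lra.
Qed.

Lemma signed_unit_range i x y : x \in S -> y \in S ->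
  dotv (signed_unit i) x - dotv (signed_unit i) y <= k%:R.
Proof.
move=> xS yS; rewrite !dotv_signed_unit.
have [a [ak ->]] := S_box xS i; have [b [bk ->]] := S_box yS i.
move: ak bk (ler0n R a) (ler0n R b); rewrite -!(ler_nat R).
by case: (sg i); rewrite ?expr1 ?expr0 ?mulN1r ?mul1r; lra.
Qed.

Lemma signed_unit_inj i x y :
  dotv (signed_unit i) x = dotv (signed_unit i) y -> x 0 i = y 0 i.
Proof.
by rewrite !dotv_signed_unit; case: (sg i); rewrite ?mulN1r ?mul1r //; apply: oppr_inj.
Qed.

Variables (s : {perm 'I_n}) (alpha : R).
Hypothesis alpha_ge : k%:R + 1 <= alpha.

Lemma dotv_xsigma x :
  dotv (xsigma alpha s sg) x = \sum_l alpha ^+ (s l).+1 * dotv (signed_unit l) x.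
Proof. by apply: eq_bigr => l _; rewrite mxE dotv_signed_unit; ring. Qed.

Lemma sum_powers_lt j : k%:R * \sum_(t < j) alpha ^+ t.+1 < alpha ^+ j.+1.
Proof.
have alpha_gt0 : 0 < alpha by have := ler0n R k; have := alpha_ge; lra.
elim: j => [|j IH]; first by rewrite big_ord0 mulr0 expr1.
rewrite big_ord_recr /= mulrDr [alpha ^+ j.+2]exprS.
have : (k%:R + 1) * alpha ^+ j.+1 <= alpha * alpha ^+ j.+1.
  by rewrite ler_wpM2r // exprn_ge0 // ltW.
lra.
Qed.

(* As [alpha >= k + 1], the weight of coordinate [i] in [x_sigma] outweighs [k] times the
   total weight of the coordinates ranked below it. *)
Lemma xsigma_lt v y i : v \in S -> y \in S ->
  (forall l, (s i < s l)%N -> dotv (signed_unit l) y = dotv (signed_unit l) v) ->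
  dotv (signed_unit i) v < dotv (signed_unit i) y ->
  dotv (xsigma alpha s sg) v < dotv (xsigma alpha s sg) y.
Proof.
move=> vS yS above lt_i.
pose D l := dotv (signed_unit l) y - dotv (signed_unit l) v.
have alpha0 : 0 <= alpha by have := ler0n R k; have := alpha_ge; lra.
have pow_ge0 t : 0 <= alpha ^+ t by apply: exprn_ge0.
rewrite -subr_gt0 !dotv_xsigma -sumrB (eq_bigr (fun l => alpha ^+ (s l).+1 * D l)); last first.
  by move=> l _; rewrite mulrBr.
rewrite (bigID (fun l => s l < s i)%N) /=.
rewrite [X in _ + X](bigD1 i) ?ltnn //=.
rewrite [X in _ + (_ + X)]big1 ?addr0; last first.
  move=> l /andP[]; rewrite -leqNgt leq_eqVlt => /predU1P[sl|/above]; last first.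
    by rewrite /D => ->; rewrite subrr mulr0.
  by move/eqP: sl => /eqP/val_inj/perm_inj ->; rewrite eqxx.
have reindex : \sum_(l | (s l < s i)%N) alpha ^+ (s l).+1 = \sum_(t < s i) alpha ^+ t.+1.
  rewrite (big_ord_widen_cond n xpredT (fun t : nat => alpha ^+ t.+1)); last exact: ltnW.
  by rewrite [RHS](reindex_inj (@perm_inj _ s)).
have below : - (k%:R * \sum_(t < s i) alpha ^+ t.+1) <=
    \sum_(l | (s l < s i)%N) alpha ^+ (s l).+1 * D l.
  rewrite -reindex mulr_sumr -sumrN; apply: ler_sum => l _.
  rewrite mulrC -mulrN; apply: ler_wpM2l => //.
  by have := signed_unit_range l vS yS; rewrite /D; lra.
have top : alpha ^+ (s i).+1 <= alpha ^+ (s i).+1 * D i.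
  by rewrite ler_peMr //; have := signed_unit_int yS vS lt_i; rewrite /D; lra.
by have := sum_powers_lt (s i); lra.
Qed.

Lemma xsigma_lexmax v (l : 'I_n) y : v \in S -> y \in S ->
  (forall x, x \in S -> dotv (xsigma alpha s sg) x <= dotv (xsigma alpha s sg) v) ->
  (forall l' : 'I_n, (l < l')%N ->
     dotv (signed_unit (s^-1 l')%g) y = dotv (signed_unit (s^-1 l')%g) v) ->
  dotv (signed_unit (s^-1 l)%g) y <= dotv (signed_unit (s^-1 l)%g) v.
Proof.
move=> vS yS vmax above; rewrite leNgt; apply/negP => /(xsigma_lt vS yS) lt_xsigma.
have := vmax y yS; rewrite leNgt lt_xsigma // permKV => l' ll'.
by have := above _ ll'; rewrite permK.
Qed.

End SignedPermutation.

Theorem mainTheorem6 (R : realFieldType) (n k d : nat) (S : seq 'rV[R]_n)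
  (s : {perm 'I_n}) (sg : 'I_n -> bool) (alpha : R) (v : 'rV[R]_n) :
  lattice_in_box k S ->
  polytope_dim (conv_hull S) d ->
  (2 * k + 1)%:R <= alpha ->
  is_vertex (conv_hull S) v ->
  (forall x, conv_hull S x -> dotv (xsigma alpha s sg) x <= dotv (xsigma alpha s sg) v) ->
  forall c : 'rV[R]_n,
    exists q : seq 'rV[R]_n,
      c_monotone_path (conv_hull S) c (v :: q) /\
      is_vertex (conv_hull S) (last v q) /\
      (forall x, conv_hull S x -> dotv c x <= dotv c (last v q)) /\
      (size q <= d * k)%N.
Proof.
move=> S_box dimP alpha_ge /is_vertex_mem vS vmax c.
have alpha_k : k%:R + 1 <= alpha by move: alpha_ge; rewrite natrD natrM; have := ler0n R k; lra.
have vmaxS x : x \in S -> dotv (xsigma alpha s sg) x <= dotv (xsigma alpha s sg) v.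
  by move=> xS; apply/vmax/mem_conv_hull.
pose e l := signed_unit R sg (s^-1 l)%g.
have e_int l := @signed_unit_int R n k S sg S_box (s^-1 l)%g.
have e_range l := @signed_unit_range R n k S sg S_box (s^-1 l)%g.
have v_lexmax l y yS := @xsigma_lexmax R n k S sg S_box s alpha alpha_k v l y vS yS vmaxS.
have separate y : y \in S -> (forall l, dotv (e l) y = dotv (e l) v) -> y = v.
  move=> _ ye; apply/rowP => i; apply: (signed_unit_inj (sg := sg)).
  by have := ye (s i); rewrite /e permK.
have [ys [ys_S free_ys paths]] := lex_max_vertex_paths vS e_int e_range v_lexmax separate.
have [q [path_q [g gq] [_ qmax] len_q]] := paths c.
have cmax : on_face S c (last v q) by move=> y yS; apply: qmax => // z _; rewrite !dotv0l.
exists q; do !split=> //; first exact: exposed_is_vertex gq.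
  by move=> x; apply: on_face_conv_hull.
apply: leq_trans len_q (leq_mul _ (leqnn k)).
by apply: free_le_dim dimP (mem_conv_hull vS) _ free_ys => y /ys_S/mem_conv_hull.
Qed.
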